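(* Let $B$ be a commutative ring with identity and $A$ a dense subring of $B$. If $A$ is completely normal, then $B$ is completely normal and hence $B$ is a pm-ring.
   Context: All rings are commutative with identity; subrings contain the identity. A ring $R$ is completely normal if $\operatorname{spec} R$ (prime ideals with the Zariski topology) is a completely normal topological space. A pm-ring is a ring in which every prime ideal is contained in a unique maximal ideal. A subring $A$ of $B$ is dense in $B$ if for every ideal $I$ of $B$ and every $b\in B\setminus \operatorname{rad}(I)$ there exists $a\in B\setminus\operatorname{rad}(I)$ with $ab\in A$. *)

From HB Require Import structures.
From mathcomp Require Import all_boot all_algebra.
Set Implicit Arguments. Unset Strict Implicit. Unset Printing Implicit Defensive.
Import GRing.Theory.
Local Open Scope ring_scope.

Section RingDefs.
Variable R : comPzRingType.

Definition is_ideal (I : R -> Prop) : Prop :=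
  [/\ I 0, (forall x y, I x -> I y -> I (x + y)) & (forall r x, I x -> I (r * x))].

Definition is_prime_ideal (P : R -> Prop) : Prop :=
  [/\ is_ideal P, ~ P 1 & (forall a b, P (a * b) -> P a \/ P b)].

Definition is_maximal_ideal (M : R -> Prop) : Prop :=
  [/\ is_ideal M, ~ M 1 &
      (forall J : R -> Prop, is_ideal J -> (forall x, M x -> J x) ->
         J 1 \/ (forall x, J x <-> M x))].

Definition rad (I : R -> Prop) : R -> Prop := fun x => exists n : nat, I (x ^+ n).

(* points of spec R are prime ideals; a subset of spec R is a predicate on
   predicates (only its prime members matter) *)
Definition spec_set := (R -> Prop) -> Prop.

Definition zariski_closed (C : spec_set) : Prop :=
  exists E : R -> Prop, forall P, is_prime_ideal P ->
    (C P <-> (forall x, E x -> P x)).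

Definition zariski_open (U : spec_set) : Prop :=
  exists C : spec_set, zariski_closed C /\
    forall P, is_prime_ideal P -> (U P <-> ~ C P).

(* the subspace S of spec R is normal: disjoint closed subsets of S
   (traces S ∩ C of closed sets) have disjoint open neighbourhoods in S *)
Definition normal_subspace (S : spec_set) : Prop :=
  forall C1 C2 : spec_set, zariski_closed C1 -> zariski_closed C2 ->
    (forall P, is_prime_ideal P -> S P -> C1 P -> C2 P -> False) ->
    exists U1 U2 : spec_set, [/\ zariski_open U1, zariski_open U2,
      (forall P, is_prime_ideal P -> S P -> C1 P -> U1 P),
      (forall P, is_prime_ideal P -> S P -> C2 P -> U2 P) &
      (forall P, is_prime_ideal P -> S P -> U1 P -> U2 P -> False)].

Definition completely_normal : Prop :=
  forall S : spec_set, normal_subspace S.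

Definition pm_ring : Prop :=
  forall P, is_prime_ideal P ->
    (exists M, is_maximal_ideal M /\ forall x, P x -> M x) /\
    (forall M1 M2, is_maximal_ideal M1 -> is_maximal_ideal M2 ->
       (forall x, P x -> M1 x) -> (forall x, P x -> M2 x) ->
       forall x, M1 x <-> M2 x).

End RingDefs.

(* A is (identified via the injective unital ring morphism f with) a dense
   subring of B *)
Definition dense_subring (A B : comPzRingType) (f : {rmorphism A -> B}) : Prop :=
  forall I : B -> Prop, is_ideal I ->
    forall b : B, ~ rad I b ->
      exists a : B, ~ rad I a /\ exists a' : A, f a' = a * b.

From Pilot Require Import Defs.
From HB Require Import structures.
From mathcomp Require Import all_boot all_algebra.
From mathcomp Require Import classical_sets.
From Stdlib Require Import Classical.
Import GRing.Theory.
Local Open Scope ring_scope.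
Local Open Scope classical_set_scope.

(* Contraction Q |-> f^-1(Q) maps spec B continuously to spec A, and density
   makes it initial: a prime Q of B contains E as soon as f^-1(Q) contains the
   contraction of the intersection of all primes over E.  So every closed set
   of spec B is the preimage of a closed set of spec A, and normality of the
   image of a subspace S of spec B pulls back to S.  Finally, in a completely
   normal spectrum two distinct maximal ideals over a prime P are disjoint
   closed points of the subspace {P, M1, M2}, yet every open neighbourhood of
   either of them contains P. *)

Section PrimeIdeals.
Context {R : comPzRingType}.
Implicit Types (I M P Q E : R -> Prop).

Lemma prime_ideal_rad {Q x} : is_prime_ideal Q -> Defs.rad Q x -> Q x.
Proof.
move=> [_ Q1 Qprime] [n]; elim: n => [|n IHn]; first by rewrite expr0.
by rewrite exprS => /Qprime [].
Qed.

Lemma maximal_ideal_prime {M} : is_maximal_ideal M -> is_prime_ideal M.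
Proof.
move=> [[M0 MD MM] M1 Mmax]; split=> // a b Mab.
case: (classic (M a)) => [|Mna]; [by left | right].
pose J x := exists m r, M m /\ x = m + r * a.
have J_ideal : is_ideal J.
  split.
  - by exists 0, 0; rewrite mul0r addr0.
  - move=> _ _ [m [r [Mm ->]]] [m' [r' [Mm' ->]]].
    exists (m + m'), (r + r'); split; first exact: MD.
    by rewrite mulrDl !addrA (addrAC m (r * a)).
  - move=> s _ [m [r [Mm ->]]]; exists (s * m), (s * r); split; first exact: MM.
    by rewrite mulrDr mulrA.
have MJ x : M x -> J x by exists x, 0; rewrite mul0r addr0.
case: (Mmax J J_ideal MJ) => [[m [r [Mm def1]]] | JM].
- have -> : b = b * m + r * (a * b) by rewrite mulrA (mulrC b) -mulrDl -def1 mul1r.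
  by apply: MD; apply: MM.
- by case: Mna; apply/JM; exists 0, 1; rewrite add0r mul1r.
Qed.

Lemma maximal_ideal_eq {M1 M2} : is_maximal_ideal M1 -> is_maximal_ideal M2 ->
  (forall x, M1 x -> M2 x) -> forall x, M1 x <-> M2 x.
Proof.
move=> [_ _ M1max] [M2_ideal M2n1 _] M12.
by case: (M1max M2 M2_ideal M12) => // eq12 x; split=> /eq12.
Qed.

Lemma ideal_chain_bigcup I (F : set (set R)) :
  F !=set0 -> (forall X, F X -> [/\ is_ideal X, ~ X 1 & I `<=` X]) ->
  total_on F subset ->
  [/\ is_ideal (\bigcup_(X in F) X), ~ (\bigcup_(X in F) X) 1
    & I `<=` \bigcup_(X in F) X].
Proof.
move=> [X0 FX0] Fgood Fchain; have [[X0_0 _ _] _ IX0] := Fgood X0 FX0.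
split.
- split; first by exists X0.
  + move=> x y [X FX Xx] [Y FY Yy].
    case: (Fchain X Y FX FY) => [XY | YX].
    * by exists Y => //; have [[_ YD _] _ _] := Fgood Y FY; apply: YD => //; apply: XY.
    * by exists X => //; have [[_ XD _] _ _] := Fgood X FX; apply: XD => //; apply: YX.
  + by move=> r x [X FX Xx]; exists X => //; have [[_ _ XM] _ _] := Fgood X FX; apply: XM.
- by move=> [X FX X1]; have [_ + _] := Fgood X FX.
- by move=> x Ix; exists X0 => //; apply: IX0.
Qed.

Lemma proper_ideal_sub_maximal I : is_ideal I -> ~ I 1 ->
  exists M, is_maximal_ideal M /\ forall x, I x -> M x.
Proof.
move=> I_ideal I1.
pose good X := [/\ is_ideal X, ~ X 1 & I `<=` X].
(* Zorn_bigcup also sees the empty chain, whose union is set0. *)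
have [M [Mgood Mmax]] : exists M, (M = set0 \/ good M) /\
    forall X, M `<` X -> ~ (X = set0 \/ good X).
  apply: Zorn_bigcup => F Fgood Fchain.
  have bigcup_good : \bigcup_(X in F) X = \bigcup_(X in F `&` good) X.
    apply/seteqP; split=> x [X FX Xx]; exists X => //; last by case: FX.
    by split=> //; case: (Fgood X FX) => // X0; rewrite X0 in Xx.
  case: (classic (exists X, F X /\ good X)) => [[X FXgood] | Fnone].
    right; rewrite bigcup_good; apply: ideal_chain_bigcup; first by exists X.
      by move=> Y [].
    by move=> Y Z [FY _] [FZ _]; apply: Fchain.
  left; apply/seteqP; split=> x // [X FX Xx]; case: (Fgood X FX) => [X0 | gX].
  + by rewrite X0 in Xx.
  + by case: Fnone; exists X.
have [M_ideal M1 IM] : good M.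
  case: Mgood => // M0; exfalso; apply: (Mmax I); last by right; split.
  have [I0 _ _] := I_ideal.
  by rewrite M0; split=> [x // | /(_ 0 I0)].
exists M; split=> //; split=> // J J_ideal MJ.
case: (classic (J 1)) => [|J1]; [by left | right].
case: (classic (forall x, J x <-> M x)) => // JneM.
exfalso; apply: (Mmax J); last by right; split=> // x /IM /MJ.
by split=> // JM; apply: JneM => x; split; [apply: JM | apply: MJ].
Qed.

Lemma zariski_open_generalize {U : spec_set R} {P Q} : zariski_open U ->
  is_prime_ideal P -> is_prime_ideal Q -> (forall x, P x -> Q x) -> U Q -> U P.
Proof.
move=> [C [[E defC] defU]] Pprime Qprime PQ UQ.
apply/(defU P Pprime) => /(defC P Pprime) EP.
by move: UQ => /(defU Q Qprime); apply; apply/(defC Q Qprime) => x /EP /PQ.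
Qed.

Lemma completely_normal_pm_ring : completely_normal R -> pm_ring R.
Proof.
move=> Rcn P Pprime; split.
  by apply: proper_ideal_sub_maximal; case: Pprime.
move=> M1 M2 M1max M2max PM1 PM2.
case: (classic (forall x, M1 x <-> M2 x)) => // M1neM2; exfalso.
have M1prime := maximal_ideal_prime M1max.
have M2prime := maximal_ideal_prime M2max.
pose S : spec_set R := fun X => [\/ X = P, X = M1 | X = M2].
pose V M : spec_set R := fun X => forall x, M x -> X x.
have V_closed M : zariski_closed (V M) by exists M.
have V12_disjoint X : is_prime_ideal X -> S X -> V M1 X -> V M2 X -> False.
  move=> _ [-> | -> | ->] VM1 VM2; apply: M1neM2.
  - by apply: maximal_ideal_eq => // x /VM1 /PM2.
  - by move=> x; rewrite (maximal_ideal_eq M2max M1max VM2).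
  - exact: maximal_ideal_eq.
have [U1 [U2 [U1_open U2_open VU1 VU2 U12_disjoint]]] :=
  Rcn S _ _ (V_closed M1) (V_closed M2) V12_disjoint.
apply: (U12_disjoint P Pprime); first exact: Or31.
- apply: (zariski_open_generalize U1_open Pprime M1prime PM1).
  by apply: VU1 => //; exact: Or32.
- apply: (zariski_open_generalize U2_open Pprime M2prime PM2).
  by apply: VU2 => //; exact: Or33.
Qed.

Definition prime_hull E : R -> Prop :=
  fun x => forall Q, is_prime_ideal Q -> (forall y, E y -> Q y) -> Q x.

End PrimeIdeals.

Section Contraction.
Context {A B : comPzRingType} (f : {rmorphism A -> B}).

Definition comap (Q : B -> Prop) : A -> Prop := fun a => Q (f a).

Lemma prime_ideal_comap {Q} : is_prime_ideal Q -> is_prime_ideal (comap Q).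
Proof.
rewrite /comap => -[[Q0 QD QM] Q1 Qprime]; split.
- split; first by rewrite rmorph0.
  + by move=> x y Qx Qy; rewrite rmorphD; apply: QD.
  + by move=> r x Qx; rewrite rmorphM; apply: QM.
- by rewrite rmorph1.
- by move=> a b; rewrite rmorphM; apply: Qprime.
Qed.

Lemma zariski_closed_comap (C : spec_set A) :
  zariski_closed C -> zariski_closed (fun Q => C (comap Q)).
Proof.
move=> [E defC]; exists (fun b => exists2 a, E a & b = f a) => Q Qprime.
rewrite (defC _ (prime_ideal_comap Qprime)); split.
- by move=> EQ _ [a Ea ->]; apply: EQ.
- by move=> fEQ a Ea; apply: fEQ; exists a.
Qed.

Lemma zariski_open_comap (U : spec_set A) :
  zariski_open U -> zariski_open (fun Q => U (comap Q)).
Proof.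
move=> [C [C_closed defU]]; exists (fun Q => C (comap Q)).
split; first exact: zariski_closed_comap.
by move=> Q Qprime; apply: defU; apply: prime_ideal_comap.
Qed.

Lemma completely_normal_comap :
  (forall C : spec_set B, zariski_closed C -> exists2 C' : spec_set A,
     zariski_closed C' & forall Q, is_prime_ideal Q -> C Q <-> C' (comap Q)) ->
  completely_normal A -> completely_normal B.
Proof.
move=> comap_initial Acn S C1 C2 /comap_initial[C1' C1'_closed defC1]
  /comap_initial[C2' C2'_closed defC2] C12_disjoint.
pose S' : spec_set A := fun P => exists2 Q, is_prime_ideal Q /\ S Q & P = comap Q.
have C12'_disjoint P : is_prime_ideal P -> S' P -> C1' P -> C2' P -> False.
  move=> _ [Q [Qprime SQ] ->] /defC1 C1Q /defC2 C2Q.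
  exact: (C12_disjoint Q Qprime SQ (C1Q Qprime) (C2Q Qprime)).
have [U1 [U2 [U1_open U2_open CU1 CU2 U12_disjoint]]] :=
  Acn S' C1' C2' C1'_closed C2'_closed C12'_disjoint.
exists (fun Q => U1 (comap Q)), (fun Q => U2 (comap Q)).
have S'comap Q : is_prime_ideal Q -> S Q -> S' (comap Q) by exists Q.
split; try exact: zariski_open_comap.
- move=> Q Qprime SQ /(defC1 Q Qprime) C1Q.
  exact: CU1 (prime_ideal_comap Qprime) (S'comap Q Qprime SQ) C1Q.
- move=> Q Qprime SQ /(defC2 Q Qprime) C2Q.
  exact: CU2 (prime_ideal_comap Qprime) (S'comap Q Qprime SQ) C2Q.
- move=> Q Qprime SQ.
  exact: U12_disjoint (prime_ideal_comap Qprime) (S'comap Q Qprime SQ).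
Qed.

Hypothesis f_dense : dense_subring f.

Lemma dense_comap_prime_hull E Q : is_prime_ideal Q ->
  (forall a, prime_hull E (f a) -> comap Q a) -> forall b, E b -> Q b.
Proof.
move=> Qprime hullQ b Eb; case: (classic (Q b)) => // Qnb; exfalso.
have [Q_ideal _ Qmul] := Qprime.
have [a [Qna [a' fa']]] : exists a, ~ Defs.rad Q a /\ exists a', f a' = a * b.
  by apply: f_dense => // /(prime_ideal_rad Qprime).
have : Q (a * b).
  rewrite -fa'; apply: hullQ => P [[_ _ PM] _ _] EP.
  by rewrite fa'; apply: PM; apply: EP.
by case/Qmul=> // Qa; apply: Qna; exists 1%N; rewrite expr1.
Qed.

Lemma dense_zariski_closed_comap (C : spec_set B) : zariski_closed C ->
  exists2 C' : spec_set A, zariski_closed C' &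
    forall Q, is_prime_ideal Q -> C Q <-> C' (comap Q).
Proof.
move=> [E defC]; pose E' a := prime_hull E (f a).
exists (fun P => forall a, E' a -> P a); first by exists E'.
move=> Q Qprime; rewrite defC //; split.
- by move=> EQ a; apply.
- exact: dense_comap_prime_hull.
Qed.

End Contraction.

Theorem theorem4p7 (A B : comPzRingType) (f : {rmorphism A -> B}) :
  injective f -> dense_subring f -> completely_normal A ->
  completely_normal B /\ pm_ring B.
Proof.
move=> _ f_dense Acn.
have Bcn : completely_normal B.
  by apply: (completely_normal_comap f) Acn; apply: dense_zariski_closed_comap.
by split=> //; apply: completely_normal_pm_ring.
Qed.
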